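(* In the system $\mathbf{BTC}$ with summation (defined in the context), for every tuplix term $t$, every data variable $u$ and every data term $p$ with $u\notin\mathit{Var}(p)$, the following identities are derivable: \[ \textstyle\sum_u (t\oplus\gamma(u-p)) = t[p/u],\qquad \sum_u t = t[p/u]+\sum_u t,\qquad \sum_u t = t[p/u]+\sum_u (t\oplus\tilde\gamma(u-p)). \]
   Context: Data: a non-trivial cancellation meadow is a commutative ring with unit with a total unary operation $(\cdot)^{-1}$ satisfying $(u^{-1})^{-1}=u$, $u\cdot(u\cdot u^{-1})=u$, $0\neq 1$ and the cancellation law ($u\neq 0$ and $uv=uw$ imply $v=w$). Fix such a $\mathcal{D}$. Data terms are built from data variables, constants $0,1$, binary $+,\cdot$ and unary $-$, $(\cdot)^{-1}$; $p/q$ abbreviates $p\cdot q^{-1}$, $p-q$ abbreviates $p+(-q)$; $\mathit{Var}(p)$ is the set of data variables in $p$. Fix a nonempty attribute set $A$. Tuplix terms are built from tuplix variables, constants $\epsilon,\delta$, entries $a(p)$ ($a\in A$), zero tests $\gamma(p)$, binary operators $\oplus$ and $+$, and, for each data variable $u$, the unary binder $\sum_u$ (binding $u$). $\tilde\gamma(p)$ abbreviates $\gamma(1-p/p)$. $\mathit{FV}(t)$ is the set of free data variables of $t$, and $t[p/u]$ is capture-avoiding substitution of $p$ for the free occurrences of $u$ in $t$ (bound variables renamed as needed). The proof system (two-sorted equational logic) has axioms (T1) $x\oplus y=y\oplus x$; (T2) $(x\oplus y)\oplus z=x\oplus(y\oplus z)$; (T3) $x\oplus\epsilon=x$; (T4)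 $x\oplus\delta=\delta$; (T5) $a(u)\oplus a(v)=a(u+v)$; (T6) $\gamma(u)=\gamma(u/u)$; (T7) $\gamma(0)=\epsilon$; (T8) $\gamma(1)=\delta$; (T9) $\gamma(u)\oplus\gamma(v)=\gamma(u/u+v/v)$; (T10) $\gamma(u-v)\oplus a(u)=\gamma(u-v)\oplus a(v)$; (C1) $x+y=y+x$; (C2) $(x+y)+z=x+(y+z)$; (C3) $x+x=x$; (C4) $x+\delta=x$; (C5) $x\oplus(y+z)=(x\oplus y)+(x\oplus z)$; (C6) $\gamma(u)+\gamma(v)=\gamma(uv)$; and the schemes, for tuplix terms $s,t$ and data term $p$: (S1) $\sum_u t=t$ if $u\notin\mathit{FV}(t)$; (S2) $\sum_u t=\sum_v t[v/u]$ if $v\notin\mathit{FV}(t)$; (S3) $\sum_u(s\oplus t)=s\oplus\sum_u t$ if $u\notin\mathit{FV}(s)$; (S4) $\sum_u(s+t)=\sum_u s+\sum_u t$; (S5) $\sum_u\gamma(u-p)=\epsilon$ if $u\notin\mathit{Var}(p)$; (S6) $\sum_u\tilde\gamma(u-p)=\epsilon$ if $u\notin\mathit{Var}(p)$; plus the rule (DE): if $\mathcal{D}\models p=q$ then $\gamma(p)=\gamma(q)$. *)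

From HB Require Import structures.
From mathcomp Require Import all_boot all_order all_algebra.
Set Implicit Arguments. Unset Strict Implicit. Unset Printing Implicit Defensive.
Import GRing.Theory.

Record cancellation_meadow (R : comNzRingType) (inv : R -> R) : Prop := {
  meadow_invK : forall u : R, inv (inv u) = u;
  meadow_RIL  : forall u : R, (u * (u * inv u) = u)%R;
  meadow_cancel : forall u v w : R, u != 0%R -> (u * v = u * w)%R -> v = w
}.

Inductive dterm : Type :=
  | DVar : nat -> dterm
  | D0 : dterm
  | D1 : dterm
  | DAdd : dterm -> dterm -> dterm
  | DMul : dterm -> dterm -> dterm
  | DNeg : dterm -> dterm
  | DInv : dterm -> dterm.

Definition DDiv (p q : dterm) : dterm := DMul p (DInv q).
Definition DSub (p q : dterm) : dterm := DAdd p (DNeg q).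

Fixpoint dvars (p : dterm) : seq nat :=
  match p with
  | DVar x => [:: x]
  | D0 | D1 => [::]
  | DAdd p q | DMul p q => dvars p ++ dvars q
  | DNeg p | DInv p => dvars p
  end.

Fixpoint deval (R : comNzRingType) (inv : R -> R) (rho : nat -> R) (p : dterm) : R :=
  match p with
  | DVar x => rho x
  | D0 => 0%R
  | D1 => 1%R
  | DAdd p q => (deval inv rho p + deval inv rho q)%R
  | DMul p q => (deval inv rho p * deval inv rho q)%R
  | DNeg p => (- deval inv rho p)%R
  | DInv p => inv (deval inv rho p)
  end.

Definition models_eq (R : comNzRingType) (inv : R -> R) (p q : dterm) : Prop :=
  forall rho : nat -> R, deval inv rho p = deval inv rho q.

Fixpoint dsubst (sigma : nat -> dterm) (p : dterm) : dterm :=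
  match p with
  | DVar x => sigma x
  | D0 => D0
  | D1 => D1
  | DAdd p q => DAdd (dsubst sigma p) (dsubst sigma q)
  | DMul p q => DMul (dsubst sigma p) (dsubst sigma q)
  | DNeg p => DNeg (dsubst sigma p)
  | DInv p => DInv (dsubst sigma p)
  end.

(* Tuplix variables are natural numbers; A is the attribute set. *)
Inductive tterm (A : Type) : Type :=
  | TVar : nat -> tterm A
  | Eps : tterm A
  | Delta : tterm A
  | Entry : A -> dterm -> tterm A
  | Gamma : dterm -> tterm A
  | Oplus : tterm A -> tterm A -> tterm A
  | Plus : tterm A -> tterm A -> tterm A
  | Sum : nat -> tterm A -> tterm A.   (* Sum u t binds data variable u *)

Arguments TVar {A}. Arguments Eps {A}. Arguments Delta {A}.
Arguments Gamma {A}.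

Definition GammaT {A : Type} (p : dterm) : tterm A :=
  Gamma (DSub D1 (DDiv p p)).

Fixpoint fv {A : Type} (t : tterm A) : seq nat :=
  match t with
  | TVar _ | Eps | Delta => [::]
  | Entry _ p | Gamma p => dvars p
  | Oplus s t | Plus s t => fv s ++ fv t
  | Sum u t => [seq x <- fv t | x != u]
  end.

(* Capture-avoiding parallel substitution of data terms for free data
   variables; a bound variable is renamed to a fresh one exactly when it
   would capture a variable of a substituted term. *)
Fixpoint tsubst {A : Type} (sigma : nat -> dterm) (t : tterm A) : tterm A :=
  match t with
  | TVar x => TVar x
  | Eps => Eps
  | Delta => Delta
  | Entry a p => Entry a (dsubst sigma p)
  | Gamma p => Gamma (dsubst sigma p)
  | Oplus s t => Oplus (tsubst sigma s) (tsubst sigma t)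
  | Plus s t => Plus (tsubst sigma s) (tsubst sigma t)
  | Sum v t =>
      let S := flatten [seq dvars (sigma x) | x <- [seq y <- fv t | y != v]] in
      let w := if v \in S then (foldr maxn 0 S).+1 else v in
      Sum w (tsubst (fun x => if x == v then DVar w else sigma x) t)
  end.

Definition subst1 {A : Type} (t : tterm A) (p : dterm) (u : nat) : tterm A :=
  tsubst (fun x => if x == u then p else DVar x) t.

(* Two-sorted equational logic: reflexivity, symmetry, transitivity,
   congruence (including under the binder Sum u), all substitution
   instances of axioms T1-T10, C1-C6 (given schematically), the schemes
   S1-S6, and the rule DE. *)
Inductive derivable (R : comNzRingType) (inv : R -> R) (A : Type)
  : tterm A -> tterm A -> Prop :=
  | d_refl : forall t, derivable inv t t
  | d_sym : forall s t, derivable inv s t -> derivable inv t s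
  | d_trans : forall s t r, derivable inv s t -> derivable inv t r -> derivable inv s r
  | d_oplus : forall s s' t t', derivable inv s s' -> derivable inv t t' ->
      derivable inv (Oplus s t) (Oplus s' t')
  | d_plus : forall s s' t t', derivable inv s s' -> derivable inv t t' ->
      derivable inv (Plus s t) (Plus s' t')
  | d_sum : forall u s t, derivable inv s t -> derivable inv (Sum u s) (Sum u t)
  | ax_T1 : forall x y, derivable inv (Oplus x y) (Oplus y x)
  | ax_T2 : forall x y z, derivable inv (Oplus (Oplus x y) z) (Oplus x (Oplus y z))
  | ax_T3 : forall x, derivable inv (Oplus x Eps) x
  | ax_T4 : forall x, derivable inv (Oplus x Delta) Delta
  | ax_T5 : forall a p q, derivable inv (Oplus (Entry a p) (Entry a q)) (Entry a (DAdd p q))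
  | ax_T6 : forall p, derivable inv (Gamma p) (Gamma (DDiv p p))
  | ax_T7 : derivable inv (Gamma D0) Eps
  | ax_T8 : derivable inv (Gamma D1) Delta
  | ax_T9 : forall p q, derivable inv (Oplus (Gamma p) (Gamma q))
                                      (Gamma (DAdd (DDiv p p) (DDiv q q)))
  | ax_T10 : forall a p q, derivable inv (Oplus (Gamma (DSub p q)) (Entry a p))
                                         (Oplus (Gamma (DSub p q)) (Entry a q))
  | ax_C1 : forall x y, derivable inv (Plus x y) (Plus y x)
  | ax_C2 : forall x y z, derivable inv (Plus (Plus x y) z) (Plus x (Plus y z))
  | ax_C3 : forall x, derivable inv (Plus x x) x
  | ax_C4 : forall x, derivable inv (Plus x Delta) x
  | ax_C5 : forall x y z, derivable inv (Oplus x (Plus y z)) (Plus (Oplus x y) (Oplus x z))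
  | ax_C6 : forall p q, derivable inv (Plus (Gamma p) (Gamma q)) (Gamma (DMul p q))
  | ax_S1 : forall u t, u \notin fv t -> derivable inv (Sum u t) t
  | ax_S2 : forall u v t, v \notin fv t -> derivable inv (Sum u t) (Sum v (subst1 t (DVar v) u))
  | ax_S3 : forall u s t, u \notin fv s -> derivable inv (Sum u (Oplus s t)) (Oplus s (Sum u t))
  | ax_S4 : forall u s t, derivable inv (Sum u (Plus s t)) (Plus (Sum u s) (Sum u t))
  | ax_S5 : forall u p, u \notin dvars p -> derivable inv (Sum u (Gamma (DSub (DVar u) p))) Eps
  | ax_S6 : forall u p, u \notin dvars p -> derivable inv (Sum u (GammaT (DSub (DVar u) p))) Eps
  | r_DE : forall p q, models_eq inv p q -> derivable inv (Gamma p) (Gamma q).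

From mathcomp Require Import all_boot all_order all_algebra.
From Stdlib Require Import Setoid Morphisms.
Set Implicit Arguments. Unset Strict Implicit. Unset Printing Implicit Defensive.
Import GRing.Theory.

(* A zero test acts as a guard licensing substitution: if every valuation
   that makes [c] vanish identifies [sigma x] and [tau x] for the free
   variables [x] of [t], then [gamma(c) (+) t[sigma] = gamma(c) (+) t[tau]].
   This goes by induction on [t]: T10 handles entries, DE zero tests,
   idempotence of [gamma(c)] the operator [(+)], C5 the choice [+], and for
   [Sum] a common fresh binder lets S3 move [gamma(c)] inside.  Taking
   [c = u - p] gives [Sum_u (t (+) gamma(u - p)) = t[p/u] (+) Sum_u gamma(u - p)
   = t[p/u]] by S3 and S5; splitting [eps = gamma(u - p) + gammatilde(u - p)] under [Sum_u]
   with C5 and S4 gives the third identity, and C3 then the second.  The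
   guard needs [1 + 1 <> 0], so that [1 + y/y] never vanishes; when
   [1 + 1 = 0] the system is inconsistent and there is nothing to prove. *)

#[export] Instance derivable_Equivalence (R : comNzRingType) (inv : R -> R) (A : Type) :
  Equivalence (@derivable R inv A).
Proof. by split; [exact: d_refl | exact: d_sym | exact: d_trans]. Qed.

#[export] Instance Oplus_derivable_Proper (R : comNzRingType) (inv : R -> R) (A : Type) :
  Proper (@derivable R inv A ==> @derivable R inv A ==> @derivable R inv A) (@Oplus A).
Proof. by move=> ? ? ? ? ? ?; apply: d_oplus. Qed.

#[export] Instance Plus_derivable_Proper (R : comNzRingType) (inv : R -> R) (A : Type) :
  Proper (@derivable R inv A ==> @derivable R inv A ==> @derivable R inv A) (@Plus A).
Proof. by move=> ? ? ? ? ? ?; apply: d_plus. Qed.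

#[export] Instance Sum_derivable_Proper (R : comNzRingType) (inv : R -> R) (A : Type) u :
  Proper (@derivable R inv A ==> @derivable R inv A) (@Sum A u).
Proof. by move=> ? ? ?; apply: d_sum. Qed.

#[export] Hint Resolve d_refl : core.

Definition fresh_var (S : seq nat) : nat := (foldr maxn 0 S).+1.

Lemma fresh_var_notin (S : seq nat) : fresh_var S \notin S.
Proof.
suff ltS y : y \in S -> y < fresh_var S by apply/negP => /ltS; rewrite ltnn.
rewrite /fresh_var ltnS; elim: S => //= a S IH; rewrite inE => /orP [/eqP->|/IH].
  exact: leq_maxl.
by move/leq_trans; apply; apply: leq_maxr.
Qed.

Definition rename_binder (v : nat) (S : seq nat) : nat :=
  if v \in S then fresh_var S else v.

Lemma rename_binder_notin v S : rename_binder v S \notin S.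
Proof. by rewrite /rename_binder; case: ifP => [_|->]; first exact: fresh_var_notin. Qed.

Definition upd (s : nat -> dterm) (v : nat) (q : dterm) : nat -> dterm :=
  fun x => if x == v then q else s x.

Definition dcomp (r s : nat -> dterm) : nat -> dterm := fun x => dsubst r (s x).

Definition capture_vars A (s : nat -> dterm) (v : nat) (t : tterm A) : seq nat :=
  flatten [seq dvars (s x) | x <- [seq y <- fv t | y != v]].

Lemma tsubst_SumE A (s : nat -> dterm) v (t : tterm A) :
  tsubst s (Sum v t) = Sum (rename_binder v (capture_vars s v t))
    (tsubst (upd s v (DVar (rename_binder v (capture_vars s v t)))) t).
Proof. by []. Qed.

Lemma rename_binder_fresh A (s : nat -> dterm) v (t : tterm A) x :
  x \in fv t -> x != v -> rename_binder v (capture_vars s v t) \notin dvars (s x).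
Proof.
move=> xt xv; apply: contraNN (rename_binder_notin v (capture_vars s v t)) => ws.
by apply/flatten_mapP; exists x; rewrite // mem_filter xv.
Qed.

Lemma dvars_dsubst s q : dvars (dsubst s q) =i flatten [seq dvars (s x) | x <- dvars q].
Proof.
elim: q => [x|||p IHp q IHq|p IHp q IHq|p IHp|p IHp] y //=;
  by rewrite ?cats0 // map_cat flatten_cat !mem_cat IHp IHq.
Qed.

Lemma eq_dsubst s s' q : {in dvars q, s =1 s'} -> dsubst s q = dsubst s' q.
Proof.
elim: q => [x|||p IHp q IHq|p IHp q IHq|p IHp|p IHp] //= eq_s;
  rewrite ?(eq_s x (mem_head _ _)) ?IHp ?IHq // => x xq;
  by apply: eq_s; rewrite mem_cat xq ?orbT.
Qed.

Lemma dsubst_var q : dsubst DVar q = q.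
Proof. by elim: q => //= [p -> q ->|p -> q ->|p ->|p ->]. Qed.

Lemma dsubst_id s q : {in dvars q, s =1 DVar} -> dsubst s q = q.
Proof. by move/eq_dsubst->; apply: dsubst_var. Qed.

Lemma dsubst_comp r s q : dsubst r (dsubst s q) = dsubst (dcomp r s) q.
Proof. by elim: q => //= [p -> q ->|p -> q ->|p ->|p ->]. Qed.

Lemma deval_dsubst (R : comNzRingType) (inv : R -> R) rho s q :
  deval inv rho (dsubst s q) = deval inv (fun x => deval inv rho (s x)) q.
Proof. by elim: q => //= [p -> q ->|p -> q ->|p ->|p ->]. Qed.

Lemma eq_deval (R : comNzRingType) (inv : R -> R) rho rho' q :
  {in dvars q, rho =1 rho'} -> deval inv rho q = deval inv rho' q.
Proof.
elim: q => [x|||p IHp q IHq|p IHp q IHq|p IHp|p IHp] //= eq_rho;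
  rewrite ?(eq_rho x (mem_head _ _)) ?IHp ?IHq // => x xq;
  by apply: eq_rho; rewrite mem_cat xq ?orbT.
Qed.

Lemma eq_deval_dsubst (R : comNzRingType) (inv : R -> R) rho s s' q :
  {in dvars q, forall x, deval inv rho (s x) = deval inv rho (s' x)} ->
  deval inv rho (dsubst s q) = deval inv rho (dsubst s' q).
Proof. by move=> eq_s; rewrite !deval_dsubst; apply: eq_deval. Qed.

Lemma fv_tsubst A s (t : tterm A) : fv (tsubst s t) =i flatten [seq dvars (s x) | x <- fv t].
Proof.
elim: t s => [n|||a q|q|t1 IH1 t2 IH2|t1 IH1 t2 IH2|v t IH] s y;
  rewrite ?tsubst_SumE /= ?dvars_dsubst ?map_cat ?flatten_cat ?mem_cat ?IH1 ?IH2 //.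
rewrite mem_filter IH; apply/andP/flatten_mapP => [[yw /flatten_mapP [x xt]]|[x]].
  rewrite /upd; case: eqVneq => [_|xv ys]; first by rewrite inE (negPf yw).
  by exists x; rewrite // mem_filter xv.
rewrite mem_filter => /andP [xv xt] ys; split.
  by apply: contraNneq (rename_binder_fresh s xt xv) => <-.
by apply/flatten_mapP; exists x; rewrite // /upd (negPf xv).
Qed.

Lemma eq_tsubst A s s' (t : tterm A) : {in fv t, s =1 s'} -> tsubst s t = tsubst s' t.
Proof.
elim: t s s' => [n|||a q|q|t1 IH1 t2 IH2|t1 IH1 t2 IH2|v t IH] s s' eq_s;
  rewrite ?tsubst_SumE //=.
1,2: by rewrite (eq_dsubst eq_s).
1,2: by rewrite (IH1 s s') ?(IH2 s s') // => x xt; apply: eq_s; rewrite mem_cat xt ?orbT.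
have eq_capture : capture_vars s v t = capture_vars s' v t.
  by congr flatten; apply/eq_in_map => x /eq_s ->.
rewrite eq_capture; congr Sum; apply: IH => x xt; rewrite /upd.
by case: eqVneq => // xv; apply: eq_s; rewrite mem_filter xv.
Qed.

Lemma tsubst_var A (t : tterm A) : tsubst DVar t = t.
Proof.
elim: t => [n|||a q|q|t1 IH1 t2 IH2|t1 IH1 t2 IH2|v t IH];
  rewrite ?tsubst_SumE /= ?dsubst_var ?IH1 ?IH2 //.
have vN : v \notin capture_vars DVar v t.
  apply/flatten_mapP => -[x]; rewrite mem_filter inE => /andP [xv _] /eqP vx.
  by rewrite vx eqxx in xv.
rewrite /rename_binder (negPf vN) -[X in _ = Sum v X]IH; congr Sum.
by apply: eq_tsubst => x _; rewrite /upd; case: eqP => [->|].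
Qed.

Section Renaming.
Variables (R : comNzRingType) (inv : R -> R) (A : Type).
Local Notation "s ≡ t" := (@derivable R inv A s t) (at level 70).

Lemma Sum_tsubst_alpha (t : tterm A) v (s s' : nat -> dterm) w z :
  (forall r s1, tsubst r (tsubst s1 t) ≡ tsubst (dcomp r s1) t) ->
  s v = DVar w -> s' v = DVar z ->
  (forall x, x \in fv t -> x != v ->
     [/\ s x = s' x, w \notin dvars (s x) & z \notin dvars (s' x)]) ->
  Sum w (tsubst s t) ≡ Sum z (tsubst s' t).
Proof.
move=> comp_t sv s'v agree.
have [wz|wz] := eqVneq w z.
  rewrite -wz (@eq_tsubst _ s s') // => x xt.
  by case: (eqVneq x v) => [->|xv]; [rewrite sv s'v wz | case: (agree x xt xv)].
have zN : z \notin fv (tsubst s t).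
  rewrite fv_tsubst; apply/flatten_mapP => -[y yt]; case: (eqVneq y v) => [->|yv].
    by rewrite sv inE eq_sym (negPf wz).
  by case: (agree y yt yv) => -> _ /negP.
rewrite (ax_S2 inv w zN) /subst1 comp_t (@eq_tsubst _ _ s') // => x xt; rewrite /dcomp.
case: (eqVneq x v) => [->|xv]; first by rewrite sv /= eqxx s'v.
case: (agree x xt xv) => <- wN _; apply: dsubst_id => y ys.
by case: eqVneq => // yw; rewrite -yw ys in wN.
Qed.

(* [tsubst] renames bound variables, so substitutions compose only up to
   alpha-conversion, that is, derivably by S2. *)
Lemma tsubst_comp (t : tterm A) r s : tsubst r (tsubst s t) ≡ tsubst (dcomp r s) t.
Proof.
elim: t r s => [n|||a q|q|t1 IH1 t2 IH2|t1 IH1 t2 IH2|v t IH] r s;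
  rewrite ?tsubst_SumE /= ?dsubst_comp ?IH1 ?IH2 //.
set w1 := rename_binder v (capture_vars s v t); set s1 := upd s v (DVar w1).
set w2 := rename_binder w1 _; set r1 := upd r w1 (DVar w2).
set w3 := rename_binder v _.
rewrite IH; apply: (Sum_tsubst_alpha (v := v)) => //.
- by rewrite /dcomp /s1 /upd eqxx /= /r1 /upd eqxx.
- by rewrite /upd eqxx.
move=> x xt xv.
have w1N : w1 \notin dvars (s x) := rename_binder_fresh s xt xv.
have r1_sx : dsubst r1 (s x) = dsubst r (s x).
  by apply: eq_dsubst => y ys; rewrite /r1 /upd; case: eqVneq => // yw; rewrite -yw ys in w1N.
rewrite /dcomp /s1 /upd (negPf xv) r1_sx; split => //; last first.
  exact: (rename_binder_fresh (dcomp r s) xt xv).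
apply/negP; rewrite dvars_dsubst => /flatten_mapP [y ys w2r].
have yt : y \in fv (tsubst s1 t).
  by rewrite fv_tsubst; apply/flatten_mapP; exists x; rewrite // /s1 /upd (negPf xv).
have yw1 : y != w1 by apply: contraNneq w1N => <-.
by move: (rename_binder_fresh r yt yw1); rewrite -/w2 w2r.
Qed.

Lemma tsubst_Sum_rename s v (t : tterm A) z :
  (forall x, x \in fv t -> x != v -> z \notin dvars (s x)) ->
  tsubst s (Sum v t) ≡ Sum z (tsubst (upd s v (DVar z)) t).
Proof.
move=> zN; rewrite tsubst_SumE; apply: (Sum_tsubst_alpha (v := v)).
- exact: tsubst_comp.
- by rewrite /upd eqxx.
- by rewrite /upd eqxx.
move=> x xt xv; rewrite /upd (negPf xv); split => //; last exact: zN.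
exact: rename_binder_fresh.
Qed.

Lemma notin_fv_subst1 (t : tterm A) p u : u \notin dvars p -> u \notin fv (subst1 t p u).
Proof.
move=> uN; apply/negP; rewrite fv_tsubst => /flatten_mapP [x _].
by case: eqVneq => [_|xu]; [apply/negP | rewrite inE => /eqP ux; rewrite ux eqxx in xu].
Qed.

Lemma Oplus_ACA (x y z w : tterm A) :
  Oplus (Oplus x y) (Oplus z w) ≡ Oplus (Oplus x z) (Oplus y w).
Proof.
rewrite (ax_T2 inv x y) (ax_T2 inv x z) -(ax_T2 inv y z w) (ax_T1 inv y z).
by rewrite (ax_T2 inv z y w).
Qed.

End Renaming.

Section Meadow.
Variables (R : comNzRingType) (inv : R -> R).
Hypothesis HD : cancellation_meadow inv.
Variable A : Type.
Local Open Scope ring_scope.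
Local Notation "s ≡ t" := (@derivable R inv A s t) (at level 70).
Local Notation "[[ q ]] rho" := (deval inv rho q) (at level 0, q at level 99, rho at level 0).

Lemma meadow_mulfV (x : R) : x != 0 -> x * inv x = 1.
Proof. by move=> x0; apply: (meadow_cancel HD x0); rewrite mulr1 (meadow_RIL HD). Qed.

(* [delta = gamma(1) (+) gamma(1) = gamma(1/1 + 1/1) = gamma(0) = eps] *)
Lemma derivable_char2 : 1 + 1 = 0 :> R -> forall s t : tterm A, s ≡ t.
Proof.
move=> char2.
have inv1 : inv 1 = 1 by rewrite -[inv 1]mul1r meadow_mulfV ?oner_neq0.
have delta_eps : Delta ≡ Eps.
  rewrite -(ax_T4 inv Delta) -{1}(ax_T8 inv A) -(ax_T8 inv A) ax_T9 -(ax_T7 inv A).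
  by apply: r_DE => rho /=; rewrite inv1 mulr1.
suff delta_all r : Delta ≡ r by move=> s t; apply: d_trans (d_sym (delta_all s)) _.
by rewrite -(ax_T4 inv r) delta_eps ax_T3.
Qed.

Lemma Eps_Gamma_GammaT (q : dterm) : Eps ≡ Plus (Gamma q) (GammaT q).
Proof.
rewrite ax_C6 -(ax_T7 inv A); apply: r_DE => rho /=.
by rewrite mulrDr mulr1 mulrN (meadow_RIL HD) addrN.
Qed.

Section Guard.
Hypothesis char_neq2 : 1 + 1 != 0 :> R.

Lemma addr1_mulfV_neq0 (y : R) : 1 + y * inv y != 0.
Proof. by have [->|y0] := eqVneq y 0; rewrite ?mul0r ?addr0 ?oner_neq0 ?meadow_mulfV. Qed.

Lemma Gamma_guard_Gamma c q q' :
  (forall rho, [[c]] rho = 0 -> [[q]] rho = [[q']] rho) ->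
  Oplus (Gamma c) (Gamma q) ≡ Oplus (Gamma c) (Gamma q').
Proof.
move=> qq'; rewrite !ax_T9 ax_T6 [in X in _ ≡ X]ax_T6; apply: r_DE => rho /=.
have [c0|c0] := eqVneq ([[c]] rho) 0; first by rewrite qq'.
by rewrite (meadow_mulfV c0) !(meadow_mulfV (addr1_mulfV_neq0 _)).
Qed.

Lemma Gamma_guard_absorb c d :
  (forall rho, [[c]] rho = 0 -> [[d]] rho = 0) -> Gamma c ≡ Oplus (Gamma c) (Gamma d).
Proof. by move=> cd; rewrite (@Gamma_guard_Gamma c d D0) // ax_T7 ax_T3. Qed.

Lemma Gamma_guard_tsubst c (t : tterm A) sigma tau :
  (forall x, x \in fv t -> forall rho, [[c]] rho = 0 -> [[sigma x]] rho = [[tau x]] rho) ->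
  Oplus (Gamma c) (tsubst sigma t) ≡ Oplus (Gamma c) (tsubst tau t).
Proof.
elim: t sigma tau => [n|||a q|q|t1 IH1 t2 IH2|t1 IH1 t2 IH2|v t IH] sigma tau st //.
- rewrite /=; set d := DSub (dsubst sigma q) (dsubst tau q).
  have cd : Gamma c ≡ Oplus (Gamma c) (Gamma d).
    apply: Gamma_guard_absorb => rho c0 /=.
    by rewrite (@eq_deval_dsubst _ _ _ _ tau) ?subrr // => x xq; apply: st.
  by rewrite cd !ax_T2 ax_T10.
- by apply: Gamma_guard_Gamma => rho c0; apply: eq_deval_dsubst => x xq; apply: st.
- rewrite /=; have cc : Gamma c ≡ Oplus (Gamma c) (Gamma c) by apply: Gamma_guard_absorb.
  rewrite cc !(Oplus_ACA _ (Gamma c) (Gamma c)).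
  by rewrite (IH1 sigma tau) ?(IH2 sigma tau) // => x xt;
    apply: st; rewrite mem_cat xt ?orbT.
- by rewrite /= !ax_C5 (IH1 sigma tau) ?(IH2 sigma tau) // => x xt;
    apply: st; rewrite mem_cat xt ?orbT.
set L := dvars c ++ flatten [seq dvars (sigma x) ++ dvars (tau x) | x <- fv t].
have zL : fresh_var L \notin L := fresh_var_notin L; set z := fresh_var L in zL.
have zc : z \notin dvars c by apply: contraNN zL; rewrite mem_cat => ->.
have z_fresh x : x \in fv t -> (z \notin dvars (sigma x)) && (z \notin dvars (tau x)).
  move=> xt; rewrite -negb_or; apply: contraNN zL => zx; rewrite mem_cat; apply/orP; right.
  by apply/flatten_mapP; exists x; rewrite // mem_cat.
rewrite (@tsubst_Sum_rename _ inv _ sigma v t z); last by move=> x /z_fresh /andP [].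
rewrite (@tsubst_Sum_rename _ inv _ tau v t z); last by move=> x /z_fresh /andP [].
rewrite -!(@ax_S3 _ inv _ z (Gamma c) _ zc) IH // => x xt rho c0; rewrite /upd.
by case: eqVneq => // xv; apply: st; rewrite // mem_filter xv.
Qed.

End Guard.

Lemma Sum_Gamma_subst (t : tterm A) u p :
  u \notin dvars p -> Sum u (Oplus t (Gamma (DSub (DVar u) p))) ≡ subst1 t p u.
Proof.
move=> up; have [char2|char_neq2] := eqVneq (1 + 1 : R) 0; first exact: derivable_char2.
set c := DSub (DVar u) p.
have guard_t : Oplus (Gamma c) t ≡ Oplus (Gamma c) (subst1 t p u).
  rewrite -{1}(tsubst_var t); apply: Gamma_guard_tsubst => // x _ rho /= c0.
  by case: eqP => // ->; apply/eqP; rewrite -subr_eq0 c0.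
rewrite (ax_T1 inv t) guard_t (ax_T1 inv (Gamma c)) (ax_S3 inv _ (notin_fv_subst1 t up)).
by rewrite (ax_S5 inv A up) ax_T3.
Qed.

Lemma Sum_split_GammaT (t : tterm A) u p : u \notin dvars p ->
  Sum u t ≡ Plus (subst1 t p u) (Sum u (Oplus t (GammaT (DSub (DVar u) p)))).
Proof.
by move=> up; rewrite -(Sum_Gamma_subst t up) -ax_S4 -ax_C5 -Eps_Gamma_GammaT ax_T3.
Qed.

Lemma Sum_absorb_subst (t : tterm A) u p :
  u \notin dvars p -> Sum u t ≡ Plus (subst1 t p u) (Sum u t).
Proof. by move=> up; rewrite (Sum_split_GammaT t up) -ax_C2 ax_C3. Qed.

End Meadow.

Theorem lemma4 (R : comNzRingType) (inv : R -> R) (HD : cancellation_meadow inv)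
  (A : Type) (HA : inhabited A) (t : tterm A) (u : nat) (p : dterm) :
  u \notin dvars p ->
  [/\ derivable inv (Sum u (Oplus t (Gamma (DSub (DVar u) p)))) (subst1 t p u),
      derivable inv (Sum u t) (Plus (subst1 t p u) (Sum u t)) &
      derivable inv (Sum u t)
        (Plus (subst1 t p u) (Sum u (Oplus t (GammaT (DSub (DVar u) p)))))].
Proof.
move=> up; split.
- exact: Sum_Gamma_subst.
- exact: Sum_absorb_subst.
- exact: Sum_split_GammaT.
Qed.
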